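(* Let $n=2^s m$ with $s\in\mathbb{Z}_{\ge0}$ and $m$ odd. There is a polynomial $P$ in $s+1$ variables with zero constant term, depending only on $s$, such that for every multiset $S$ of $n$ complex numbers, $M_1(T_s)=P\big(M_{1}(S),M_{2}(S),M_{4}(S),\dots,M_{2^s}(S)\big)$, where $T_0=S$ and $T_j=(T_{j-1})_\times$ for $j\in[s]$.
   Context: For a finite multiset $T=\{u_1,\dots,u_N\}$ of complex numbers (indexed with repetitions) and $p\in\mathbb{N}$, $M_p(T)=\sum_{k=1}^N u_k^p$, and $T_\times$ is the multiset $\{u_ju_k: 1\le j<k\le N\}$ (of size $\binom{N}{2}$). *)

From HB Require Import structures.
From mathcomp Require Import all_boot all_order all_algebra.
From mathcomp Require Import complex.
From mathcomp Require Import Rstruct.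
From mathcomp Require Import mpoly.

Set Implicit Arguments.
Unset Strict Implicit.
Unset Printing Implicit Defensive.
Import Order.TTheory GRing.Theory Num.Theory.
Local Open Scope ring_scope.

Definition C : Type := complex Rdefinitions.R.

Definition Mp (p : nat) (T : seq C) : C := \sum_(u <- T) u ^+ p.

(* T_x = { u_j u_k : 1 <= j < k <= N } for T = [u_1; ...; u_N]. *)
Fixpoint pairprod (T : seq C) : seq C :=
  match T with
  | [::] => [::]
  | x :: T' => [seq x * y | y <- T'] ++ pairprod T'
  end.

Definition Titer (j : nat) (S : seq C) : seq C := iter j pairprod S.

(* Since M_p of the pair products of T are the pair products of the u^p,
   2 M_p(T_x) = M_p(T)^2 - M_{2p}(T).  Hence M_{2^k}(T_{j+1}) is half the
   square of M_{2^k}(T_j) minus half of M_{2^(k+1)}(T_j), and unfolding this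
   recursion down to T_0 = S expresses M_1(T_s) as a polynomial without
   constant term in M_1(S), M_2(S), ..., M_(2^s)(S).  The recursion holds for
   every list S. *)

From HB Require Import structures.
From mathcomp Require Import all_boot all_order all_algebra.
From mathcomp Require Import complex Rstruct mpoly.
From mathcomp Require Import ring.
Local Open Scope ring_scope.
Import GRing.Theory Num.Theory.

Lemma Mp_cons (p : nat) (x : C) (T : seq C) : Mp p (x :: T) = x ^+ p + Mp p T.
Proof. exact: big_cons. Qed.

Lemma Mp_cat (p : nat) (T1 T2 : seq C) : Mp p (T1 ++ T2) = Mp p T1 + Mp p T2.
Proof. exact: big_cat. Qed.

Lemma Mp_map_mull (p : nat) (x : C) (T : seq C) :
  Mp p [seq x * y | y <- T] = x ^+ p * Mp p T.
Proof.
by rewrite /Mp big_map big_distrr; apply: eq_bigr => y _; rewrite exprMn.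
Qed.

Lemma Mp_pairprod (p : nat) (T : seq C) :
  2 * Mp p (pairprod T) = Mp p T ^+ 2 - Mp (p * 2) T.
Proof.
elim: T => [|x T IH] /=; first by rewrite /Mp !big_nil mulr0 expr0n subr0.
rewrite Mp_cat Mp_map_mull mulrDr IH !Mp_cons exprM; ring.
Qed.

(* The variable 'X_i stands for M_(2^i)(S); [inord k] is junk for k > s,
   hence the bound k + j <= s below. *)
Fixpoint psum_Titer_mpoly (s j k : nat) : {mpoly C[s.+1]} :=
  if j is j'.+1 then
    2^-1 *: (psum_Titer_mpoly s j' k ^+ 2 - psum_Titer_mpoly s j' k.+1)
  else 'X_(inord k).

Lemma psum_Titer_mpolyE (s j k : nat) (S : seq C) : (k + j <= s)%N ->
  (psum_Titer_mpoly s j k).@[fun i : 'I_s.+1 => Mp (2 ^ i) S]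
  = Mp (2 ^ k) (Titer j S).
Proof.
elim: j k => [|j IH] k le_kSj_s /=.
  by rewrite mevalXU inordK // ltnS -(addn0 k).
have le_Skj_s : (k.+1 + j <= s)%N by rewrite addSnnS.
have le_kj_s : (k + j <= s)%N by apply: leq_trans le_Skj_s.
have two_neq0 : (2 : C) != 0 by rewrite pnatr_eq0.
rewrite mevalZ mevalB mevalM !IH //.
apply: (mulfI two_neq0).
by rewrite Mp_pairprod -expnSr expr2 (mulVKf two_neq0).
Qed.

Lemma psum_Titer_mpoly_coeff0 (s j k : nat) : (psum_Titer_mpoly s j k)@_0%MM = 0.
Proof.
elim: j k => [|j IH] k /=.
  by rewrite mcoeffX; case: eqP => // /(congr1 mdeg); rewrite mdeg1 mdeg0.
by rewrite mcoeffZ mcoeffB -[X in X - _]/(mcoeff 0%MM _) rmorphXn /= !IH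
  expr0n /= subr0 mulr0.
Qed.

Theorem lemma3p5 (s : nat) :
  exists P : {mpoly C[s.+1]},
    P@_0%MM = 0 /\
    forall (m : nat) (S : seq C),
      odd m -> size S = (2 ^ s * m)%N ->
      Mp 1 (Titer s S) = P.@[fun i : 'I_s.+1 => Mp (2 ^ i) S].
Proof.
exists (psum_Titer_mpoly s s 0); split; first exact: psum_Titer_mpoly_coeff0.
by move=> m S _ _; rewrite psum_Titer_mpolyE.
Qed.
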